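(* Assume (a1)–(a3) with constants $L,\beta$, and suppose in addition that $H$ is twice continuously differentiable with bounded Hessian: there is $M>0$ with $\|\nabla^2H(y)\|_2\le M$ for all $y$. Let $\gamma>0$ and let $\{(x^t,y^t,z^t)\}_{t\ge0}$ be generated by the DYS iteration. Then there exists $\tau>0$ such that for all $t\ge1$, $$\mathrm{dist}\big(0,\partial\Theta_\gamma(x^t,y^t,z^t)\big)\le\tau\,\|y^{t+1}-y^t\|,$$ where $\partial\Theta_\gamma$ is the limiting subdifferential of $\Theta_\gamma$ as a function of $(x,y,z)\in\mathbb{R}^{3n}$.
   Context: Assumptions: (a1) $F:\mathbb{R}^n\to\mathbb{R}$ is differentiable with $L$-Lipschitz gradient; (a2) $G:\mathbb{R}^n\to(-\infty,\infty]$ is proper, lower semicontinuous, and $\arg\min_y\{G(y)+\frac1{2\gamma}\|y-x\|^2\}\neq\emptyset$ for all $x$ and $\gamma>0$; (a3) $H:\mathbb{R}^n\to\mathbb{R}$ is differentiable with $\beta$-Lipschitz gradient. DYS iteration: fix $\gamma>0$, $x^0$; for $t\ge0$, $y^{t+1}\in\arg\min_y\{F(y)+\frac{1}{2\gamma}\|y-x^t\|^2\}$, $z^{t+1}\in\arg\min_z\{G(z)+\frac{1}{2\gamma}\|z-(2y^{t+1}-\gamma\nabla H(y^{t+1})-x^t)\|^2\}$, $x^{t+1}=x^t+(z^{t+1}-y^{t+1})$. Energy function: $\Theta_\gamma(x,y,z)=F(y)+G(z)+H(y)+\tfrac{1}{2\gamma}\|2y-z-x-\gamma\nabla H(y)\|^2-\tfrac{1}{2\gamma}\|x-y+\gamma\nabla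 H(y)\|^2-\tfrac1\gamma\|y-z\|^2$. Limiting subdifferential of a proper $f$ at $x\in\mathrm{dom}f$: $v\in\partial f(x)$ iff there exist $x^k\to x$ with $f(x^k)\to f(x)$ and $v^k\to v$ such that $\liminf_{z\to x^k}\frac{f(z)-f(x^k)-\langle v^k,z-x^k\rangle}{\|z-x^k\|}\ge0$ for each $k$. *)

From HB Require Import structures.
From mathcomp Require Import all_boot all_order all_algebra.
From mathcomp Require Import all_classical all_reals all_analysis.
From mathcomp Require Import Rstruct Rstruct_topology.
Set Implicit Arguments. Unset Strict Implicit. Unset Printing Implicit Defensive.
Import Order.TTheory GRing.Theory Num.Theory.
Import numFieldNormedType.Exports.
Local Open Scope classical_set_scope.
Local Open Scope ring_scope.

Notation RR := Rdefinitions.R.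
Notation vec n := 'rV[RR]_n.

Definition dotv {n} (u v : vec n) : RR := \sum_(i < n) u 0 i * v 0 i.
Definition enorm {n} (u : vec n) : RR := Num.sqrt (dotv u u).

Definition vec3 n := (vec n * vec n * vec n)%type.
Definition dot3 {n} (u v : vec3 n) : RR :=
  dotv u.1.1 v.1.1 + dotv u.1.2 v.1.2 + dotv u.2 v.2.
Definition enorm3 {n} (u : vec3 n) : RR := Num.sqrt (dot3 u u).
Definition sub3 {n} (u v : vec3 n) : vec3 n :=
  (u.1.1 - v.1.1, u.1.2 - v.1.2, u.2 - v.2).

Definition has_gradient {n} (f : vec n -> RR) (g : vec n -> vec n) : Prop :=
  forall x, differentiable (f : vec n -> RR^o) x /\
    forall v, 'd (f : vec n -> RR^o) x v = dotv (g x) v.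

Definition lipschitz_with {n} (L : RR) (g : vec n -> vec n) : Prop :=
  forall x y, enorm (g x - g y) <= L * enorm (x - y).

(* H is twice continuously differentiable: its gradient gH is differentiable
   everywhere with Hessian matrix hH (i.e. d(gH)(y) v = hH(y) v, written for
   row vectors as v *m (hH y)^T), and hH is continuous. *)
Definition has_cont_hessian {n} (gH : vec n -> vec n) (hH : vec n -> 'M[RR]_n)
  : Prop :=
  (forall y, differentiable gH y /\ forall v, 'd gH y v = v *m (hH y)^T)
  /\ continuous hH.

Definition opnorm2_le {n} (A : 'M[RR]_n) (M : RR) : Prop :=
  forall v : vec n, enorm (v *m A^T) <= M * enorm v.

Local Open Scope ereal_scope.

Definition proper_fn {T} (f : T -> \bar RR) : Prop :=
  (forall x, -oo < f x) /\ (exists x, f x < +oo).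

Definition is_argmin {T} (f : T -> \bar RR) (y : T) : Prop :=
  forall u, f y <= f u.

Definition proxG_obj {n} (G : vec n -> \bar RR) (gamma : RR) (x : vec n) :=
  fun y => G y + ((2 * gamma)^-1 * enorm (y - x) ^+ 2)%R%:E.

Definition DYS_iter {n} (F : vec n -> RR) (G : vec n -> \bar RR)
  (gH : vec n -> vec n) (gamma : RR) (x y z : nat -> vec n) : Prop :=
  forall t : nat,
    is_argmin (fun u => (F u + (2 * gamma)^-1 * enorm (u - x t) ^+ 2)%R%:E)
      (y t.+1)
    /\ is_argmin (proxG_obj G gamma
          (2 *: y t.+1 - gamma *: gH (y t.+1) - x t)%R) (z t.+1)
    /\ x t.+1 = (x t + (z t.+1 - y t.+1))%R.

Definition Theta {n} (F : vec n -> RR) (G : vec n -> \bar RR) (H : vec n -> RR)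
  (gH : vec n -> vec n) (gamma : RR) (w : vec3 n) : \bar RR :=
  let: (x, y, z) := w in
  (F y + H y
   + (2 * gamma)^-1 * enorm (2 *: y - z - x - gamma *: gH y) ^+ 2
   - (2 * gamma)^-1 * enorm (x - y + gamma *: gH y) ^+ 2
   - gamma^-1 * enorm (y - z) ^+ 2)%R%:E + G z.

(* Limiting subdifferential of f : R^{3n} -> \bar R at w (in dom f).
   v \in lim_subdiff f w  iff  f w is finite and there exist w_k -> w with
   f w_k -> f w (finite values) and v_k -> v such that for each k
   liminf_{u -> w_k} (f u - f w_k - <v_k, u - w_k>) / ||u - w_k|| >= 0,
   the liminf condition being written out in epsilon-delta form. *)
Definition lim_subdiff {n} (f : vec3 n -> \bar RR) (w : vec3 n) : set (vec3 n) :=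
  [set v | exists fw : RR, f w = fw%:E /\
    exists (wk : nat -> vec3 n) (fk : nat -> RR) (vk : nat -> vec3 n),
      (fun k => enorm3 (sub3 (wk k) w)) @ \oo --> (0 : RR)%R /\
      (forall k, f (wk k) = (fk k)%:E) /\
      fk @ \oo --> fw /\
      (fun k => enorm3 (sub3 (vk k) v)) @ \oo --> (0 : RR)%R /\
      (forall k (eps : RR), (0 < eps)%R -> exists2 delta : RR, (0 < delta)%R &
         forall u, (0 < enorm3 (sub3 u (wk k)))%R ->
                   (enorm3 (sub3 u (wk k)) < delta)%R ->
           f u - (fk k)%:E - (dot3 (vk k) (sub3 u (wk k)))%:E
             >= (- eps * enorm3 (sub3 u (wk k)))%R%:E)].

(* distance from 0 to a set S of R^{3n}, as an extended real (+oo if S empty) *)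
Definition dist0 {n} (S : set (vec3 n)) : \bar RR :=
  ereal_inf [set (enorm3 v)%:E | v in S].

From HB Require Import structures.
From mathcomp Require Import all_boot all_order all_algebra.
From mathcomp Require Import all_classical all_reals all_analysis.
From mathcomp Require Import Rstruct Rstruct_topology.
From mathcomp Require Import ring lra.
Import Order.TTheory GRing.Theory Num.Theory.
Import numFieldNormedType.Exports.
Local Open Scope classical_set_scope.
Local Open Scope ring_scope.

(* Fix t >= 1 and write
   (Xp, X, Y, Z, Y2) = (x_{t-1}, x_t, y_t, z_t, y_{t+1}).  The proof exhibits
   one explicit element of the limiting subdifferential of Theta_gamma at
   (X, Y, Z) and bounds its norm.
   - Theta_gamma = Theta_smooth + G(z), where Theta_smooth is real-valued and
     differentiable; an exact second-order expansion of Theta_smooth, the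
     proximal inequality for z_t and the Lipschitz bound on grad H show that
     grad Theta_smooth + (0, 0, (p - Z)/gamma) is a Frechet subgradient, hence
     a limiting subgradient (constant approximating sequences).
   - Fermat's rule at the F-proximal points gives
     gamma grad F(y_t) = x_{t-1} - y_t, which collapses that subgradient to
     (-(Y - Z), Y - Z - gamma (Y - Z) hess H(Y), Y - Z)/gamma, and expresses
     Y - Z through y_{t+1} - y_t and grad F(y_{t+1}) - grad F(y_t).
   - The Lipschitz bound on grad F and the Hessian bound then give
     |subgradient| <= tau |y_{t+1} - y_t| with tau depending on gamma, L, M. *)

Section EuclideanGeometry.
Context {n : nat}.
Implicit Types (u v w c : vec n) (A : 'M[RR]_n).

Lemma dotvC u v : dotv u v = dotv v u.
Proof. by apply: eq_bigr => i _; rewrite mulrC. Qed.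

Lemma dotvDl u v w : dotv (u + v) w = dotv u w + dotv v w.
Proof. by rewrite /dotv -big_split; apply: eq_bigr => i _; rewrite mxE mulrDl. Qed.

Lemma dotvZl k u v : dotv (k *: u) v = k * dotv u v.
Proof. by rewrite /dotv mulr_sumr; apply: eq_bigr => i _; rewrite mxE mulrA. Qed.

Lemma dotvNl u v : dotv (- u) v = - dotv u v.
Proof. by rewrite -scaleN1r dotvZl mulN1r. Qed.

Lemma dotvBl u v w : dotv (u - v) w = dotv u w - dotv v w.
Proof. by rewrite dotvDl dotvNl. Qed.

Lemma dotvDr u v w : dotv w (u + v) = dotv w u + dotv w v.
Proof. by rewrite dotvC dotvDl !(dotvC w). Qed.

Lemma dotvZr k u v : dotv v (k *: u) = k * dotv v u.
Proof. by rewrite dotvC dotvZl dotvC. Qed.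

Lemma dotvNr u v : dotv v (- u) = - dotv v u.
Proof. by rewrite dotvC dotvNl dotvC. Qed.

Lemma dotvBr u v w : dotv w (u - v) = dotv w u - dotv w v.
Proof. by rewrite dotvDr dotvNr. Qed.

Lemma dotv0l v : dotv 0 v = 0.
Proof. by rewrite /dotv big1 // => i _; rewrite mxE mul0r. Qed.

Lemma dotv_ge0 u : 0 <= dotv u u.
Proof. by apply: sumr_ge0 => i _; rewrite -expr2 sqr_ge0. Qed.

Lemma dotv_eq0 u : dotv u u = 0 -> u = 0.
Proof.
move=> /psumr_eq0P u0; apply/rowP => i; rewrite mxE.
have /eqP : u 0 i * u 0 i = 0 by apply: u0 => // j _; rewrite -expr2 sqr_ge0.
by rewrite mulf_eq0 orbb => /eqP.
Qed.

Lemma enorm_sqr u : enorm u ^+ 2 = dotv u u.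
Proof. by rewrite /enorm sqr_sqrtr // dotv_ge0. Qed.

Lemma enorm_ge0 u : 0 <= enorm u.
Proof. exact: sqrtr_ge0. Qed.

Lemma enormZ k u : enorm (k *: u) = `|k| * enorm u.
Proof.
by rewrite /enorm dotvZl dotvZr mulrA -expr2 sqrtrM ?sqr_ge0 // sqrtr_sqr.
Qed.

Lemma dotv_sqrD u v : dotv (u + v) (u + v) = dotv u u + 2 * dotv u v + dotv v v.
Proof. rewrite !dotvDl !dotvDr (dotvC v u); ring. Qed.

Lemma dotv_young (t : RR) u v : 0 < t ->
  2 * dotv u v <= t * dotv u u + t^-1 * dotv v v.
Proof.
move=> t0; rewrite /dotv !mulr_sumr -big_split; apply: ler_sum => i _ /=.
have e : t * (u 0 i * u 0 i) + t^-1 * (v 0 i * v 0 i) - 2 * (u 0 i * v 0 i)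
   = t^-1 * (t * u 0 i - v 0 i) ^+ 2 by field; rewrite gt_eqF.
by rewrite -subr_ge0 e mulr_ge0 ?sqr_ge0 // invr_ge0 ltW.
Qed.

Lemma dotv_sqrD_le u v : dotv (u + v) (u + v) <= 2 * dotv u u + 2 * dotv v v.
Proof. by rewrite dotv_sqrD; have := dotv_young 1 u v ltr01; rewrite invr1; lra. Qed.

Lemma enorm_le_sqr {K : RR} {u v} : enorm u <= K * enorm v ->
  dotv u u <= K ^+ 2 * dotv v v.
Proof.
by move=> uv; rewrite -!enorm_sqr; have := enorm_ge0 u; have := enorm_ge0 v; nra.
Qed.

Lemma dotv_mxT v c A : dotv (v *m A^T) c = dotv (c *m A) v.
Proof.
rewrite /dotv; under eq_bigr do rewrite mxE mulr_suml.
rewrite exchange_big; apply: eq_bigr => j _; rewrite mxE mulr_suml.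
by apply: eq_bigr => i _; rewrite !mxE; ring.
Qed.

(* The operator-norm bound ||v A^T|| <= M ||v|| transfers to A itself:
   ||c A||^2 = <c, (c A) A^T> <= ||c|| M ||c A||. *)
Lemma opnorm2_le_tr A (M : RR) c : 0 < M -> opnorm2_le A M ->
  dotv (c *m A) (c *m A) <= M ^+ 2 * dotv c c.
Proof.
move=> M0 hA; set w := c *m A.
have h1 := enorm_le_sqr (hA w).
have h2 := dotv_young (M ^+ 2) c (w *m A^T) (exprn_gt0 2 M0).
rewrite dotvC dotv_mxT -/w in h2.
have h3 : (M ^+ 2)^-1 * dotv (w *m A^T) (w *m A^T) <= dotv w w.
  rewrite -[X in _ <= X](mulKf (x := M ^+ 2)) ?expf_neq0 ?gt_eqF //.
  by rewrite ler_wpM2l // invr_ge0 exprn_ge0 // ltW.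
lra.
Qed.

(* The library norm on row vectors is the max norm, dominated by the
   Euclidean one; this converts Frechet estimates into Euclidean ones. *)
Lemma norm_le_enorm v : `|v| <= enorm v.
Proof.
rewrite (_ : `|v| = mx_norm v) // mx_normrE; apply: bigmax_le; first exact: enorm_ge0.
move=> [i j] _ /=; rewrite (ord1 i) -sqrtr_sqr /enorm ler_sqrt ?dotv_ge0 //.
rewrite /dotv (bigD1 j) //= expr2 lerDl; apply: sumr_ge0 => k _.
by rewrite -expr2 sqr_ge0.
Qed.

Lemma dotv_abs_le c v : `|dotv c v| <= (\sum_(i < n) `|c 0 i|) * `|v|.
Proof.
rewrite /dotv mulr_suml; apply: le_trans (ler_norm_sum _ _ _) _.
apply: ler_sum => i _; rewrite normrM ler_wpM2l //.
by rewrite (_ : `|v| = mx_norm v) // mx_normrE; apply: (le_bigmax _ _ (0, i)).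
Qed.

End EuclideanGeometry.

Section EuclideanLittleO.
Context {n : nat}.
Implicit Types (c h y : vec n).

Definition euclid_littleo (r : vec n -> RR) : Prop :=
  forall e : RR, 0 < e -> exists2 d : RR, 0 < d &
    forall h, enorm h < d -> `|r h| <= e * enorm h.

Lemma euclid_littleoD {r s : vec n -> RR} :
  euclid_littleo r -> euclid_littleo s -> euclid_littleo (fun h => r h + s h).
Proof.
move=> hr hs e e0; have e20 : 0 < e / 2 by rewrite divr_gt0.
have [dr dr0 Hr] := hr _ e20; have [ds ds0 Hs] := hs _ e20.
exists (Num.min dr ds) => [|h]; first by rewrite lt_min dr0 ds0.
rewrite lt_min => /andP[hr' hs']; apply: le_trans (ler_normD _ _) _.
by have := Hr h hr'; have := Hs h hs'; lra.
Qed.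

Lemma euclid_littleoN {r : vec n -> RR} :
  euclid_littleo r -> euclid_littleo (fun h => - r h).
Proof. by move=> hr e /hr[d d0 Hd]; exists d => // h; rewrite normrN; apply: Hd. Qed.

Lemma euclid_littleo_dotv c {r : vec n -> vec n} :
  euclid_littleo (fun h => `|r h|) -> euclid_littleo (fun h => dotv c (r h)).
Proof.
move=> hr e e0; set C := \sum_(i < n) `|c 0 i|.
have C0 : 0 <= C by apply: sumr_ge0.
have [d d0 Hd] := hr _ (divr_gt0 e0 (ltr_wpDl C0 ltr01)).
exists d => // h /Hd; rewrite normr_id => rh /=.
apply: le_trans (dotv_abs_le c (r h)) _.
apply: le_trans (ler_wpM2l C0 rh) _; rewrite mulrA ler_wpM2r ?enorm_ge0 //.
by rewrite mulrA ler_pdivrMr ?ltr_wpDl //; nra.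
Qed.

Lemma euclid_littleo_sqr (k : RR) : euclid_littleo (fun h : vec n => k * dotv h h).
Proof.
move=> e e0; have k1 : 0 < `|k| + 1 by rewrite ltr_wpDl.
exists (e / (`|k| + 1)) => [|h hd]; first by rewrite divr_gt0.
rewrite /= normrM -enorm_sqr (ger0_norm (sqr_ge0 _)).
move: hd; rewrite ltr_pdivlMr // => hd.
have := enorm_ge0 h; have := normr_ge0 k; nra.
Qed.

Lemma differentiable_littleo {W : normedModType RR} {f : vec n -> W} y :
  differentiable f y -> euclid_littleo (fun h => `|f (y + h) - f y - 'd f y h|).
Proof.
move=> /diff_locally /eqaddoP fo e e0.
have /nbhs_ballP [d d0 Hd] := fo e e0.
exists d => // h hd.
have /Hd : ball 0 d h.
  by rewrite -ball_normE /ball_ /= sub0r normrN (le_lt_trans (norm_le_enorm h)).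
rewrite normr_id !fctE /= [h + y]addrC opprD addrA => /le_trans; apply.
by rewrite ler_wpM2l ?(ltW e0) ?norm_le_enorm.
Qed.

Lemma gradient_littleo {f : vec n -> RR} {gf : vec n -> vec n} y :
  has_gradient f gf -> euclid_littleo (fun h => f (y + h) - f y - dotv (gf y) h).
Proof.
move=> /(_ y) [df dfE] e /(differentiable_littleo _ df)[d d0 Hd].
by exists d => // h /Hd; rewrite normr_id dfE.
Qed.

Lemma hessian_littleo {gH : vec n -> vec n} {hH} y :
  has_cont_hessian gH hH ->
  euclid_littleo (fun h => `|gH (y + h) - gH y - h *m (hH y)^T|).
Proof.
move=> [/(_ y) [dg dgE] _] e /(differentiable_littleo _ dg)[d d0 Hd].
by exists d => // h /Hd; rewrite dgE.
Qed.

(* Fermat's rule: at a global minimiser the Frechet gradient vanishes.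
   Test along h = -s g, for which the first-order term is -s||g||^2. *)
Lemma littleo_fermat (phi : vec n -> RR) y (g : vec n) :
  (forall u, phi y <= phi u) ->
  euclid_littleo (fun h => phi (y + h) - phi y - dotv g h) -> g = 0.
Proof.
move=> ymin hphi; apply: dotv_eq0; apply/eqP; apply: contraT => gD.
have ng0 : 0 < enorm g by rewrite sqrtr_gt0 lt_neqAle eq_sym gD dotv_ge0.
have [d d0 Hd] := hphi _ (divr_gt0 ng0 (ltr0Sn _ 1)).
set s := d / (2 * enorm g).
have s0 : 0 < s by rewrite divr_gt0 // mulr_gt0.
set h := - (s *: g).
have hn : enorm h = d / 2.
  by rewrite /h -scaleNr enormZ normrN gtr0_norm // /s; field; rewrite gt_eqF.
have hd : enorm h < d by rewrite hn; lra.
have lin : dotv g h = - (enorm g * (d / 2)).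
  rewrite /h dotvNr dotvZr -enorm_sqr /s; congr (- _).
  by field; rewrite ?gt_eqF ?mulr_gt0.
have := Hd h hd; rewrite /= lin hn => /(le_trans (ler_norm _)).
have := ymin (y + h); have : 0 < enorm g * (d / 2) by rewrite mulr_gt0 ?divr_gt0.
lra.
Qed.

Lemma prox_smooth_stationary (F : vec n -> RR) (gF : vec n -> vec n)
    (g : RR) (xp y : vec n) :
  has_gradient F gF -> 0 < g ->
  is_argmin (fun u => (F u + (2 * g)^-1 * enorm (u - xp) ^+ 2)%:E) y ->
  gF y = g^-1 *: (xp - y).
Proof.
move=> hF g0 ymin.
pose phi u := F u + (2 * g)^-1 * enorm (u - xp) ^+ 2.
have rem h : phi (y + h) - phi y - dotv (gF y + g^-1 *: (y - xp)) h
    = (F (y + h) - F y - dotv (gF y) h) + (2 * g)^-1 * dotv h h.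
  rewrite /phi (dotvDl (gF y)) dotvZl !enorm_sqr.
  rewrite (_ : y + h - xp = (y - xp) + h); last by rewrite addrAC.
  by rewrite dotv_sqrD; field; rewrite gt_eqF.
have /eqP : gF y + g^-1 *: (y - xp) = 0.
  apply: (littleo_fermat phi y) => [u|e e0]; first exact: ymin u.
  have [d d0 Hd] := euclid_littleoD (gradient_littleo y hF)
                      (euclid_littleo_sqr ((2 * g)^-1)) _ e0.
  by exists d => // h; rewrite rem; apply: Hd.
by rewrite addr_eq0 => /eqP ->; rewrite -scalerN opprB.
Qed.

End EuclideanLittleO.

Section EnergyExpansion.
Context {n : nat}.
Variables (F H : vec n -> RR) (gF gH : vec n -> vec n) (g : RR).

Definition Theta_smooth (w : vec3 n) : RR :=
  let: (x, y, z) := w in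
  F y + H y
  + (2 * g)^-1 * enorm (2 *: y - z - x - g *: gH y) ^+ 2
  - (2 * g)^-1 * enorm (x - y + g *: gH y) ^+ 2
  - g^-1 * enorm (y - z) ^+ 2.

Lemma Theta_split (G : vec n -> \bar RR) (x y z : vec n) :
  Theta F G H gH g (x, y, z) = ((Theta_smooth (x, y, z))%:E + G z)%E.
Proof. by []. Qed.

(* The gradient of Theta_smooth at (X, Y, Z), A standing for the Hessian of H
   at Y: the terms in gH Y cancel in the x- and y-components. *)
Definition Theta_smooth_grad (A : 'M[RR]_n) (X Y Z : vec n) : vec3 n :=
  (g^-1 *: (Z - Y),
   gF Y + g^-1 *: (Y - X) - (Y - Z) *m A,
   g^-1 *: (X - Z) + gH Y).

Lemma Theta_smooth_expansion (A : 'M[RR]_n) (X Y Z dx dy dz : vec n) :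
  g != 0 ->
  let e := gH (Y + dy) - gH Y in
  Theta_smooth (X + dx, Y + dy, Z + dz) - Theta_smooth (X, Y, Z)
    - dot3 (Theta_smooth_grad A X Y Z) (dx, dy, dz)
  = (F (Y + dy) - F Y - dotv (gF Y) dy) + (H (Y + dy) - H Y - dotv (gH Y) dy)
    - dotv (Y - Z) (e - dy *m A^T)
    + (2 * g)^-1 * dotv (2 *: dy - dz - dx - g *: e) (2 *: dy - dz - dx - g *: e)
    - (2 * g)^-1 * dotv (dx - dy + g *: e) (dx - dy + g *: e)
    - g^-1 * dotv (dy - dz) (dy - dz).
Proof.
move=> g0 e; rewrite /Theta_smooth /dot3 /= !enorm_sqr.
have hessT : dotv ((Y - Z) *m A) dy = dotv (Y - Z) (dy *m A^T).
  by rewrite -dotv_mxT dotvC.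
rewrite (dotvBl _ ((Y - Z) *m A)) hessT.
rewrite (_ : 2 *: (Y + dy) - (Z + dz) - (X + dx) - g *: gH (Y + dy)
  = (2 *: Y - Z - X - g *: gH Y) + (2 *: dy - dz - dx - g *: e)); last first.
  by apply/rowP => i; rewrite !mxE; ring.
rewrite (_ : X + dx - (Y + dy) + g *: gH (Y + dy)
  = (X - Y + g *: gH Y) + (dx - dy + g *: e)); last first.
  by apply/rowP => i; rewrite !mxE; ring.
rewrite (_ : Y + dy - (Z + dz) = (Y - Z) + (dy - dz)); last first.
  by apply/rowP => i; rewrite !mxE; ring.
rewrite !dotv_sqrD /e.
rewrite !(dotvDl, dotvDr, dotvZl, dotvZr, dotvNl, dotvNr, dotvBl, dotvBr).
by field.
Qed.

(* Once the increment e of gH is beta-Lipschitz in dy, the negative quadratic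
   part of the expansion (together with the |dz|^2 lost in the proximal
   inequality) is O(|d|^2) uniformly. *)
Lemma expansion_quadratic_bound (beta : RR) : 0 < g -> exists2 K : RR, 0 < K &
  forall dx dy dz e : vec n, dotv e e <= beta ^+ 2 * dotv dy dy ->
    (2 * g)^-1 * dotv (dx - dy + g *: e) (dx - dy + g *: e)
    + g^-1 * dotv (dy - dz) (dy - dz) + (2 * g)^-1 * dotv dz dz
    <= K * (dotv dx dx + dotv dy dy + dotv dz dz).
Proof.
move=> g0; have k0 : 0 < (2 * g)^-1 by rewrite invr_gt0 mulr_gt0.
have gi0 : 0 < g^-1 by rewrite invr_gt0.
have gb0 : 0 <= g ^+ 2 * beta ^+ 2 by rewrite mulr_ge0 ?sqr_ge0.
exists ((2 * g)^-1 * (5 + 2 * (g ^+ 2 * beta ^+ 2)) + 2 * g^-1).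
  by apply: addr_gt0; [apply: mulr_gt0 => //; lra | rewrite mulr_gt0].
move=> dx dy dz e eb; set S := dotv dx dx + dotv dy dy + dotv dz dz.
have Dx := dotv_ge0 dx; have Dy := dotv_ge0 dy; have Dz := dotv_ge0 dz.
have b1 : dotv (dx - dy + g *: e) (dx - dy + g *: e)
    <= (4 + 2 * (g ^+ 2 * beta ^+ 2)) * S.
  have ge : g * (g * dotv e e) <= g ^+ 2 * beta ^+ 2 * dotv dy dy.
    by rewrite mulrA -expr2 -mulrA ler_wpM2l ?sqr_ge0.
  have := dotv_sqrD_le (dx - dy) (g *: e); rewrite dotvZl dotvZr.
  have := dotv_sqrD_le dx (- dy); rewrite dotvNl dotvNr opprK.
  have := mulr_ge0 gb0 (addr_ge0 Dx Dz).
  rewrite /S; lra.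
have b2 : dotv (dy - dz) (dy - dz) <= 2 * S.
  by have := dotv_sqrD_le dy (- dz); rewrite dotvNl dotvNr opprK /S; lra.
have b3 : dotv dz dz <= S by rewrite /S; lra.
have := ler_wpM2l (ltW k0) b1; have := ler_wpM2l (ltW gi0) b2.
have := ler_wpM2l (ltW k0) b3; lra.
Qed.

End EnergyExpansion.

(* Keep Theta_smooth folded, so that its expansion can be used as a rewrite. *)
Arguments Theta_smooth : simpl never.

Section ProximalPoint.
Context {n : nat}.
Variables (G : vec n -> \bar RR) (g : RR) (p Z : vec n).
Hypothesis Zmin : is_argmin (proxG_obj G g p) Z.

Lemma prox_point_finite : proper_fn G -> exists gz : RR, G Z = gz%:E.
Proof.
move=> [Gninf [u0 Gu0]]; move: (Zmin u0) (Gninf Z); rewrite /proxG_obj.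
case: (G Z) => [r| |] // Zle _; first by exists r.
exfalso; move: Zle; rewrite addye // leye_eq => /eqP Gu0E.
by have := lte_add_pinfty Gu0 (ltry ((2 * g)^-1 * enorm (u0 - p) ^+ 2));
  rewrite -Gu0E ltxx.
Qed.

Lemma prox_subgradient_ineq (gz r : RR) (u : vec n) :
  0 < g -> G Z = gz%:E -> G u = r%:E ->
  - ((2 * g)^-1 * dotv (u - Z) (u - Z))
    <= r - gz - dotv (g^-1 *: (p - Z)) (u - Z).
Proof.
move=> g0 GZ Gu; have := Zmin u; rewrite /proxG_obj GZ Gu -!EFinD lee_fin.
rewrite !enorm_sqr (_ : u - p = (Z - p) + (u - Z)); last first.
  by rewrite [RHS]addrC addrA subrK.
rewrite (dotv_sqrD (Z - p)) dotvZl -[p - Z]opprB dotvNl.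
have : (2 * g)^-1 * 2 = g^-1 by field; rewrite gt_eqF.
set k := (2 * g)^-1; set P := dotv (Z - p) (u - Z); move=> k2.
have : k * (2 * P) = g^-1 * P by rewrite -k2; ring.
lra.
Qed.

End ProximalPoint.

Section LimitingSubdifferential.
Context {n : nat}.

Lemma enorm3_sub3_id (w : vec3 n) : enorm3 (sub3 w w) = 0.
Proof.
by case: w => [[a b] c]; rewrite /enorm3 /sub3 /dot3 /= !subrr !dotv0l !addr0 sqrtr0.
Qed.

(* A Frechet subgradient is a limiting subgradient: take constant sequences. *)
Lemma frechet_lim_subdiff (f : vec3 n -> \bar RR) (w v : vec3 n) (fw : RR) :
  f w = fw%:E ->
  (forall eps : RR, 0 < eps -> exists2 delta : RR, 0 < delta &
     forall u, enorm3 (sub3 u w) < delta ->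
       ((- eps * enorm3 (sub3 u w))%:E <= f u - fw%:E - (dot3 v (sub3 u w))%:E)%E) ->
  lim_subdiff f w v.
Proof.
move=> fwE frechet; exists fw; split => //.
exists (fun=> w), (fun=> fw), (fun=> v); rewrite !enorm3_sub3_id.
do 4?split => //; try exact: cvg_cst.
by move=> _ eps /frechet[delta d0 Hd]; exists delta => // u _; apply: Hd.
Qed.

Lemma dist0_le_enorm3 (S : set (vec3 n)) (v : vec3 n) :
  S v -> (dist0 S <= (enorm3 v)%:E)%E.
Proof. by move=> Sv; apply: ereal_inf_lbound; exists v. Qed.

End LimitingSubdifferential.

Section EnergySubgradient.
Context {n : nat}.
Variables (F H : vec n -> RR) (gF gH : vec n -> vec n) (hH : vec n -> 'M[RR]_n)
  (G : vec n -> \bar RR) (beta g : RR).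
Hypotheses (F_grad : has_gradient F gF) (H_grad : has_gradient H gH)
  (H_hess : has_cont_hessian gH hH) (gH_lip : lipschitz_with beta gH)
  (g_gt0 : 0 < g) (G_proper : proper_fn G).

Definition Theta_subgrad (X Y Z p : vec n) : vec3 n :=
  let v := Theta_smooth_grad gF gH g (hH Y) X Y Z in
  (v.1.1, v.1.2, v.2 + g^-1 *: (p - Z)).

Definition smooth_remainder (Y c h : vec n) : RR :=
  (F (Y + h) - F Y - dotv (gF Y) h) + (H (Y + h) - H Y - dotv (gH Y) h)
  - dotv c (gH (Y + h) - gH Y - h *m (hH Y)^T).

Lemma smooth_remainder_littleo (Y c : vec n) :
  euclid_littleo (smooth_remainder Y c).
Proof.
apply: euclid_littleoD; first exact: euclid_littleoD (gradient_littleo Y F_grad)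
  (gradient_littleo Y H_grad).
exact/euclid_littleoN/euclid_littleo_dotv/hessian_littleo.
Qed.

Lemma Theta_remainder_ge (X Y Z p : vec n) (gz : RR) :
  is_argmin (proxG_obj G g p) Z -> G Z = gz%:E ->
  exists2 K : RR, 0 < K &
  forall (dx dy dz : vec n) (r : RR), G (Z + dz) = r%:E ->
    smooth_remainder Y (Y - Z) dy - K * (dotv dx dx + dotv dy dy + dotv dz dz)
    <= Theta_smooth F H gH g (X + dx, Y + dy, Z + dz) + r
       - (Theta_smooth F H gH g (X, Y, Z) + gz)
       - dot3 (Theta_subgrad X Y Z p) (dx, dy, dz).
Proof.
move=> Zmin GZ; have [K K0 HK] := @expansion_quadratic_bound n g beta g_gt0.
exists K => // dx dy dz r Gr.
have prox := prox_subgradient_ineq _ _ _ _ Zmin _ _ _ g_gt0 GZ Gr.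
rewrite [Z + dz - Z]addrC addKr in prox.
have /= expand := Theta_smooth_expansion F H gF gH g (hH Y) X Y Z dx dy dz
  (lt0r_neq0 g_gt0).
have vsplit : dot3 (Theta_subgrad X Y Z p) (dx, dy, dz)
    = dot3 (Theta_smooth_grad gF gH g (hH Y) X Y Z) (dx, dy, dz)
      + dotv (g^-1 *: (p - Z)) dz.
  by rewrite /dot3 /Theta_subgrad /= (dotvDl _ (g^-1 *: (p - Z))); ring.
set e := gH (Y + dy) - gH Y in expand.
have lip_e : dotv e e <= beta ^+ 2 * dotv dy dy.
  by apply: enorm_le_sqr; have := gH_lip (Y + dy) Y; rewrite addrAC subrr add0r.
have quad := HK dx dy dz e lip_e.
have Da0 : 0 <= (2 * g)^-1 * dotv (2 *: dy - dz - dx - g *: e)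
                                   (2 *: dy - dz - dx - g *: e).
  by rewrite mulr_ge0 ?dotv_ge0 // invr_ge0 mulr_ge0 // ltW.
rewrite /smooth_remainder -/e; lra.
Qed.

(* The candidate is a Frechet, hence limiting, subgradient of Theta:
   the lower bound above is >= -eps |d| once |d| is small. *)
Lemma Theta_frechet (X Y Z p : vec n) (gz : RR) :
  is_argmin (proxG_obj G g p) Z -> G Z = gz%:E ->
  lim_subdiff (Theta F G H gH g) (X, Y, Z) (Theta_subgrad X Y Z p).
Proof.
move=> Zmin GZ; have [K K0 lowerK] := Theta_remainder_ge X Y Z p gz Zmin GZ.
apply: (frechet_lim_subdiff _ _ _ (Theta_smooth F H gH g (X, Y, Z) + gz)).
  by rewrite Theta_split GZ.
move=> eps e0; have e20 : 0 < eps / 2 by rewrite divr_gt0.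
have [dR dR0 HR] := smooth_remainder_littleo Y (Y - Z) _ e20.
have eK0 : 0 < eps / (2 * K) by rewrite divr_gt0 ?mulr_gt0.
exists (Num.min dR (eps / (2 * K))); first by rewrite lt_min dR0 eK0.
move=> u; have [dx [dy [dz ->]]] : exists dx dy dz, u = (X + dx, Y + dy, Z + dz).
  by case: u => [[ux uy] uz]; exists (ux - X), (uy - Y), (uz - Z); rewrite !subrKC.
have -> : sub3 (X + dx, Y + dy, Z + dz) (X, Y, Z) = (dx, dy, dz).
  by rewrite /sub3 /= ![_ + _ - _]addrC !addKr.
rewrite Theta_split; set N := enorm3 _; rewrite lt_min => /andP[NR NK].
case Gr: (G (Z + dz)) => [r| |]; last first.
- by have := G_proper.1 (Z + dz); rewrite Gr.
- by rewrite addey // addye //= leey.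
rewrite -!EFinN -!EFinD lee_fin; apply: le_trans (lowerK _ _ _ _ Gr).
have N0 : 0 <= N := sqrtr_ge0 _.
have N2 : N ^+ 2 = dotv dx dx + dotv dy dy + dotv dz dz.
  by rewrite sqr_sqrtr // !addr_ge0 ?dotv_ge0.
have Ndy : enorm dy <= N.
  rewrite /N /enorm3 /dot3 /= ler_sqrt ?addr_ge0 ?dotv_ge0 //.
  by have := dotv_ge0 dx; have := dotv_ge0 dz; lra.
have /lerNnormlW rem := HR dy (le_lt_trans Ndy NR).
have epsN : eps / 2 * enorm dy <= eps / 2 * N by rewrite ler_wpM2l // ltW.
have KN : K * N ^+ 2 <= eps / 2 * N.
  by move: NK; rewrite ltr_pdivlMr ?mulr_gt0 // => NK; nra.
rewrite N2 in KN; lra.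
Qed.

End EnergySubgradient.

Section DYSResidual.
Context {n : nat}.

Definition dys_subgrad (g : RR) (A : 'M[RR]_n) (c : vec n) : vec3 n :=
  (- (g^-1 *: c), g^-1 *: c - c *m A, g^-1 *: c).

(* One DYS step: Xp is the previous x, Y the F-proximal point (so
   gF Y = (Xp - Y)/g), Z the G-proximal point at p = 2Y - g gH(Y) - Xp, and
   X = Xp + (Z - Y). *)
Lemma Theta_subgrad_dys (gF gH : vec n -> vec n) hH (g : RR) (Xp Y Z : vec n) :
  g != 0 -> gF Y = g^-1 *: (Xp - Y) ->
  Theta_subgrad gF gH hH g (Xp + (Z - Y)) Y Z (2 *: Y - g *: gH Y - Xp)
  = dys_subgrad g (hH Y) (Y - Z).
Proof.
move=> g0 stat; rewrite /Theta_subgrad /Theta_smooth_grad /dys_subgrad /= stat.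
by congr (_, _ - _, _); apply/rowP => i; rewrite !mxE; field.
Qed.

(* The gap y - z is controlled by consecutive y's, since
   g (gF y_{t+1} - gF y_t) = (x_t - x_{t-1}) - (y_{t+1} - y_t). *)
Lemma dys_gap (g : RR) (Xp Y Z Y2 gY gY2 : vec n) :
  g != 0 -> gY = g^-1 *: (Xp - Y) -> gY2 = g^-1 *: (Xp + (Z - Y) - Y2) ->
  Y - Z = - (g *: (gY2 - gY) + (Y2 - Y)).
Proof. by move=> g0 -> ->; apply/rowP => i; rewrite !mxE; field. Qed.

Lemma dys_subgrad_bound (g L M : RR) : 0 < g -> 0 < M -> exists2 tau : RR, 0 < tau &
  forall (A : 'M[RR]_n) (c d e : vec n), opnorm2_le A M ->
    enorm e <= L * enorm d -> c = - (g *: e + d) ->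
    enorm3 (dys_subgrad g A c) <= tau * enorm d.
Proof.
move=> g0 M0; set K := (4 * g^-1 ^+ 2 + 2 * M ^+ 2) * (2 * g ^+ 2 * L ^+ 2 + 2).
have K1 : 0 <= 4 * g^-1 ^+ 2 + 2 * M ^+ 2.
  by have := sqr_ge0 g^-1; have := sqr_ge0 M; lra.
have K2 : 0 < 2 * g ^+ 2 * L ^+ 2 + 2.
  by have := mulr_ge0 (sqr_ge0 g) (sqr_ge0 L); lra.
have K0 : 0 < K.
  by apply: mulr_gt0 => //; have := sqr_ge0 g^-1; have := exprn_gt0 2 M0; lra.
exists (Num.sqrt K) => [|A c d e hA he cE]; first by rewrite sqrtr_gt0.
rewrite /enorm3 /enorm -sqrtrM ?(ltW K0) //.
rewrite ler_sqrt ?mulr_ge0 ?dotv_ge0 ?(ltW K0) ?(ltW K2) //.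
set C := dotv c c; set D := dotv d d.
have cD : C <= (2 * g ^+ 2 * L ^+ 2 + 2) * D.
  have := dotv_sqrD_le (g *: e) d; rewrite /C cE dotvNl dotvNr opprK dotvZl dotvZr.
  have := ler_wpM2l (sqr_ge0 g) (enorm_le_sqr he); rewrite expr2 -!mulrA -/D.
  lra.
have gC : g^-1 * (g^-1 * C) = g^-1 ^+ 2 * C by rewrite mulrA -expr2.
have vy : dotv (g^-1 *: c - c *m A) (g^-1 *: c - c *m A)
    <= 2 * (g^-1 ^+ 2 * C) + 2 * (M ^+ 2 * C).
  have := dotv_sqrD_le (g^-1 *: c) (- (c *m A)).
  rewrite dotvNl dotvNr opprK dotvZl dotvZr -/C.
  by have := opnorm2_le_tr A M c M0 hA; rewrite -/C; lra.
rewrite /dot3 /= dotvNl dotvNr opprK !dotvZl !dotvZr -/C.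
have := ler_wpM2l K1 cD; rewrite /K -mulrA; lra.
Qed.

End DYSResidual.

Theorem mainTheorem5 (n : nat) (L beta M gamma : RR)
  (F : vec n -> RR) (gF : vec n -> vec n)
  (G : vec n -> \bar RR)
  (H : vec n -> RR) (gH : vec n -> vec n) (hH : vec n -> 'M[RR]_n)
  (x y z : nat -> vec n) :
  (* (a1) *)
  has_gradient F gF -> lipschitz_with L gF ->
  (* (a2) *)
  proper_fn G -> lower_semicontinuous G ->
  (forall (u : vec n) (g : RR), 0 < g ->
     exists w, is_argmin (proxG_obj G g u) w) ->
  (* (a3) *)
  has_gradient H gH -> lipschitz_with beta gH ->
  (* H is C^2 with bounded Hessian *)
  has_cont_hessian gH hH -> 0 < M -> (forall u, opnorm2_le (hH u) M) ->
  (* DYS iteration *)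
  0 < gamma -> DYS_iter F G gH gamma x y z ->
  exists2 tau : RR, 0 < tau &
    forall t : nat, (1 <= t)%N ->
      (dist0 (lim_subdiff (Theta F G H gH gamma) (x t, y t, z t))
         <= (tau * enorm (y t.+1 - y t))%:E)%E.
Proof.
move=> F_grad F_lip G_proper _ _ H_grad H_lip H_hess M_gt0 H_opnorm g_gt0 dys.
have g_neq0 := lt0r_neq0 g_gt0.
have [tau tau_gt0 bound] := @dys_subgrad_bound n gamma L M g_gt0 M_gt0.
exists tau => // -[//|t] _.
have [ymin [zmin xE]] := dys t; have [ymin' _] := dys t.+1.
have stat := prox_smooth_stationary _ _ _ _ _ F_grad g_gt0 ymin.
have stat' := prox_smooth_stationary _ _ _ _ _ F_grad g_gt0 ymin'.
have [gz GZ] := prox_point_finite _ _ _ _ zmin G_proper.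
have := Theta_frechet _ _ _ _ _ _ _ _ F_grad H_grad H_hess H_lip g_gt0 G_proper
  (x t.+1) (y t.+1) _ _ _ zmin GZ.
rewrite {2}xE Theta_subgrad_dys // => /dist0_le_enorm3 /le_trans; apply.
rewrite lee_fin; apply: bound (H_opnorm _) (F_lip _ _) _.
by apply: (dys_gap _ _ _ _ _ _ _ g_neq0 stat); rewrite stat' xE.
Qed.
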